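(* Let $\mathcal{D}$ be a DCR graph and let $P$ be any process reachable from $\textsc{dcrpsi}(\mathcal{D})$ by a finite sequence of $\tau$-transitions $\mathbf{1}\triangleright P_0\xrightarrow{\tau}P_1\xrightarrow{\tau}\cdots\xrightarrow{\tau}P_n=P$ with $P_0=\textsc{dcrpsi}(\mathcal{D})$. Then $P$ contains exactly one unguarded output prefix, i.e. exactly one occurrence of an output prefix $\overline{M}\langle N\rangle.Q$ that does not occur underneath an input prefix, an output prefix, a $\mathbf{case}$ guard or a replication.
   Context: A DCR graph is a tuple $(E,M,\to\!\bullet,\bullet\!\to,\to\!\diamond,\to\!+,\to\!\%)$ where $E$ is a set of events (names from a nominal set), $M=(Ex',Re',In')$ is a triple of subsets of $E$ (the marking), and $\to\!\bullet,\bullet\!\to,\to\!\diamond,\to\!+,\to\!\%\subseteq E\times E$ are the condition, response, milestone, include and exclude relations. For a relation $\to$ write $e\!\to=\{f\mid e\to f\}$ and $\to\! e=\{f\mid f\to e\}$. dcrPsi instance: assertions are quadruples $(Ex,Re,In,G)$ with $Ex,Re,In\subseteq E$ and $G$ a natural number built from $0$ and successor $s(\cdot)$; terms are a distinguished channel name $m$ and assertions; conditions are triples $(Co,Mi,e)$ with $Co,Mi\subseteq E$, $e\in E$; channel equality is $=$; unit $\mathbf{1}=(\emptyset,\emptyset,\emptyset,0)$; composition: $(Ex,Re,In,G)\otimes(Ex',Re',In',G')$ equals the first argument if $G>G'$, the second if $G<G'$, and $(Ex\cup Ex',Re\cup Re',In\cup In',G)$ if $G=G'$; entailment: $(Ex,Re,In,G)\vdash(Co,Mi,e)$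 iff $e\in In$, $In\cap Co\subseteq Ex$ and $In\cap Mi\cap Re=\emptyset$. Psi-calculus: processes $\mathbf{0}$, $(\!|\Psi|\!)$, $\overline{M}\langle N\rangle.P$, $\underline{M}(\lambda\tilde x)N.P$, $\mathbf{case}\ \tilde\varphi:\tilde P$, $P\mid Q$, $!P$. Frames: $\mathcal{F}((\!|\Psi|\!))=\Psi$, $\mathcal{F}(P\mid Q)=\mathcal{F}(P)\otimes\mathcal{F}(Q)$, frame of $\mathbf{0}$, prefixed, case and replicated processes is $\mathbf{1}$. Transitions $\Psi\triangleright P\xrightarrow{\alpha}P'$ are generated by: (Out) if $\Psi\vdash M\leftrightarrow K$ then $\Psi\triangleright\overline{M}\langle N\rangle.P\xrightarrow{\overline{K}N}P$; (In) if $\Psi\vdash M\leftrightarrow K$ then $\Psi\triangleright\underline{M}(\lambda\tilde y)N.P\xrightarrow{\underline{K}N[\tilde y:=\tilde L]}P[\tilde y:=\tilde L]$ for any terms $\tilde L$; (Case) if $\Psi\triangleright P_i\xrightarrow{\alpha}P'$ and $\Psi\vdash\varphi_i$ then $\Psi\triangleright\mathbf{case}\ \tilde\varphi:\tilde P\xrightarrow{\alpha}P'$; (Par) if $\Psi\otimes\mathcal{F}(Q)\triangleright P\xrightarrow{\alpha}P'$ then $\Psi\triangleright P\mid Q\xrightarrow{\alpha}P'\mid Q$, and symmetrically; (Rep) if $\Psi\triangleright P\mid !P\xrightarrow{\alpha}P'$ then $\Psi\triangleright !P\xrightarrow{\alpha}P'$; (Com) if $\mathcal{F}(P)=\Psi_P$,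 $\mathcal{F}(Q)=\Psi_Q$, $\Psi_Q\otimes\Psi\triangleright P\xrightarrow{\overline{M}N}P'$, $\Psi_P\otimes\Psi\triangleright Q\xrightarrow{\underline{K}N}Q'$ and $\Psi_Q\otimes\Psi_P\otimes\Psi\vdash M\leftrightarrow K$, then $\Psi\triangleright P\mid Q\xrightarrow{\tau}P'\mid Q'$, and symmetrically. Assertion processes and $\mathbf{0}$ have no transitions. Set-expressions in terms are identified with their values after substitution. Translation: $\textsc{dcrpsi}(\mathcal{D})=P_s\mid\big|_{e\in E}P_e$ with $P_s=(\!|(Ex',Re',In',0)|\!)\mid\overline{m}\langle(Ex',Re',In',0)\rangle.\mathbf{0}$ and $P_e=!\big(\mathbf{case}\ \varphi_e:\underline{m}(\lambda X_E,X_R,X_I,X_G)(X_E,X_R,X_I,X_G).(\overline{m}\langle U_e\rangle.\mathbf{0}\mid(\!|U_e|\!))\big)$, where $U_e=(X_E\cup\{e\},(X_R\setminus\{e\})\cup e\!\bullet\!\!\to,(X_I\setminus e\!\to\!\%)\cup e\!\to\!+,s(X_G))$ and $\varphi_e=(\to\!\bullet e,\to\!\diamond e,e)$. *)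

From Stdlib Require List.
From mathcomp Require Import all_boot.

Set Implicit Arguments.
Unset Strict Implicit.
Unset Printing Implicit Defensive.

Section DcrPsi.
Variable T : finType.

Record dcr := Dcr {
  dE : {set T};
  dEx : {set T}; dRe : {set T}; dIn : {set T};
  dcond : {set T * T}; dresp : {set T * T}; dmile : {set T * T};
  dincl : {set T * T}; dexcl : {set T * T}
}.

Definition dcr_wf (D : dcr) : Prop :=
  [/\ dEx D \subset dE D, dRe D \subset dE D & dIn D \subset dE D] /\
  [/\ dcond D \subset setX (dE D) (dE D), dresp D \subset setX (dE D) (dE D),
      dmile D \subset setX (dE D) (dE D), dincl D \subset setX (dE D) (dE D) &
      dexcl D \subset setX (dE D) (dE D)].

Definition post (r : {set T * T}) (e : T) : {set T} := [set f | (e, f) \in r].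
Definition pre (r : {set T * T}) (e : T) : {set T} := [set f | (f, e) \in r].

Record assertion := Assn { aEx : {set T}; aRe : {set T}; aIn : {set T}; aG : nat }.

(* terms: the distinguished channel name m, and assertions *)
Inductive term := Tm | TAssn of assertion.

Definition cond := ({set T} * {set T} * T)%type.

Definition unit_assn : assertion := Assn set0 set0 set0 0.

Definition comp (a b : assertion) : assertion :=
  if aG b < aG a then a
  else if aG a < aG b then b
  else Assn (aEx a :|: aEx b) (aRe a :|: aRe b) (aIn a :|: aIn b) (aG a).

Definition entails (a : assertion) (phi : cond) : Prop :=
  let: (Co, Mi, e) := phi in
  [/\ e \in aIn a, aIn a :&: Co \subset aEx a & aIn a :&: Mi :&: aRe a = set0].

Definition chan_eq (a : assertion) (M K : term) : Prop := M = K.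

(* Inputs are written with a pattern whose bound variables form a quadruple
   (X_E, X_R, X_I, X_G) ranging over assertion components; the object
   N and the continuation are given as functions of the substituted values
   (set expressions are identified with their values). *)
Inductive proc :=
| PNil
| PAssn of assertion
| POut of term & term & proc
| PIn of term & (assertion -> term) & (assertion -> proc)
| PCase of list (cond * proc)
| PPar of proc & proc
| PRep of proc.

Fixpoint frame (P : proc) : assertion :=
  match P with
  | PAssn a => a
  | PPar P Q => comp (frame P) (frame Q)
  | _ => unit_assn
  end.

Inductive label := LOut of term & term | LIn of term & term | LTau.

Inductive trans : assertion -> proc -> label -> proc -> Prop :=
| t_out Psi M K N P : chan_eq Psi M K -> trans Psi (POut M N P) (LOut K N) P
| t_in Psi M K pat k (L : assertion) : chan_eq Psi M K ->
    trans Psi (PIn M pat k) (LIn K (pat L)) (k L)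
| t_case Psi cs phi P a P' : List.In (phi, P) cs -> trans Psi P a P' ->
    entails Psi phi -> trans Psi (PCase cs) a P'
| t_parl Psi P Q a P' : trans (comp Psi (frame Q)) P a P' ->
    trans Psi (PPar P Q) a (PPar P' Q)
| t_parr Psi P Q a Q' : trans (comp Psi (frame P)) Q a Q' ->
    trans Psi (PPar P Q) a (PPar P Q')
| t_rep Psi P a P' : trans Psi (PPar P (PRep P)) a P' -> trans Psi (PRep P) a P'
| t_coml Psi P Q M K N P' Q' :
    trans (comp (frame Q) Psi) P (LOut M N) P' ->
    trans (comp (frame P) Psi) Q (LIn K N) Q' ->
    chan_eq (comp (comp (frame Q) (frame P)) Psi) M K ->
    trans Psi (PPar P Q) LTau (PPar P' Q')
| t_comr Psi P Q M K N P' Q' :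
    trans (comp (frame Q) Psi) P (LIn K N) P' ->
    trans (comp (frame P) Psi) Q (LOut M N) Q' ->
    chan_eq (comp (comp (frame Q) (frame P)) Psi) M K ->
    trans Psi (PPar P Q) LTau (PPar P' Q').

Inductive tau_reach : proc -> proc -> Prop :=
| tr_refl P : tau_reach P P
| tr_step P Q R : tau_reach P Q -> trans unit_assn Q LTau R -> tau_reach P R.

Fixpoint unguarded_outputs (P : proc) : nat :=
  match P with
  | POut _ _ _ => 1
  | PPar P Q => unguarded_outputs P + unguarded_outputs Q
  | _ => 0
  end.

Definition U (D : dcr) (e : T) (X : assertion) : assertion :=
  Assn (aEx X :|: [set e])
       ((aRe X :\ e) :|: post (dresp D) e)
       ((aIn X :\: post (dexcl D) e) :|: post (dincl D) e)
       (aG X).+1.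

Definition phi_e (D : dcr) (e : T) : cond := (pre (dcond D) e, pre (dmile D) e, e).

Definition P_event (D : dcr) (e : T) : proc :=
  PRep (PCase [:: (phi_e D e,
     PIn Tm (fun X => TAssn X)
         (fun X => PPar (POut Tm (TAssn (U D e X)) PNil) (PAssn (U D e X))))]).

Definition P_start (D : dcr) : proc :=
  let a := Assn (dEx D) (dRe D) (dIn D) 0 in
  PPar (PAssn a) (POut Tm (TAssn a) PNil).

Fixpoint par_list (ps : seq proc) : proc :=
  match ps with
  | [::] => PNil
  | p :: ps => PPar p (par_list ps)
  end.

Definition dcrpsi (D : dcr) : proc :=
  PPar (P_start D) (par_list [seq P_event D e | e <- enum (dE D)]).

End DcrPsi.

(* A process is well guarded when every input continuation carries exactly one
   unguarded output, while the bodies of outputs, case branches and replications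
   carry none.  The translation of a DCR graph is well guarded and has a single
   unguarded output (the one of the start process).  Well-guardedness is
   preserved by transitions; an output transition consumes one unguarded output
   and an input transition releases one, so a tau step, which pairs an output
   with an input, keeps their number unchanged. *)
From mathcomp Require Import all_boot.
From Stdlib Require Import Lia.
From mathcomp Require Import zify.

Section WellGuarded.
Context {T : finType}.

Inductive well_guarded : proc T -> Prop :=
| wg_nil : well_guarded (PNil T)
| wg_assn a : well_guarded (PAssn a)
| wg_out M N P :
    well_guarded P -> unguarded_outputs P = 0 -> well_guarded (POut M N P)
| wg_in M pat k :
    (forall L, well_guarded (k L) /\ unguarded_outputs (k L) = 1) ->
    well_guarded (PIn M pat k)
| wg_case cs :
    (forall phi P, List.In (phi, P) cs ->
       well_guarded P /\ unguarded_outputs P = 0) ->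
    well_guarded (PCase cs)
| wg_par P Q : well_guarded P -> well_guarded Q -> well_guarded (PPar P Q)
| wg_rep P :
    well_guarded P -> unguarded_outputs P = 0 -> well_guarded (PRep P).

Definition label_out (a : label T) : nat := if a is LOut _ _ then 1 else 0.
Definition label_in (a : label T) : nat := if a is LIn _ _ then 1 else 0.

Lemma trans_well_guarded {Psi P a P'} :
  trans Psi P a P' -> well_guarded P -> well_guarded P'.
Proof.
elim=> {Psi P a P'}.
- by move=> Psi M K N P _ wgP; inversion_clear wgP.
- move=> Psi M K pat k L _ wgP.
  by inversion_clear wgP as [| | | ? ? ? wgk | | |]; case: (wgk L).
- move=> Psi cs phi P a P' inP _ IH _ wgP.
  inversion_clear wgP as [| | | | ? wgcs | |].
  by case: (wgcs _ _ inP) => /IH.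
- by move=> Psi P Q a P' _ IH wgPQ; inversion_clear wgPQ; constructor; auto.
- by move=> Psi P Q a Q' _ IH wgPQ; inversion_clear wgPQ; constructor; auto.
- move=> Psi P a P' _ IH wgP; apply: IH.
  by inversion_clear wgP; do 2?constructor.
- move=> Psi P Q M K N P' Q' _ IHP _ IHQ _ wgPQ.
  by inversion_clear wgPQ; constructor; auto.
- move=> Psi P Q M K N P' Q' _ IHP _ IHQ _ wgPQ.
  by inversion_clear wgPQ; constructor; auto.
Qed.

Lemma trans_unguarded_outputs {Psi P a P'} :
  trans Psi P a P' -> well_guarded P ->
  unguarded_outputs P + label_in a = unguarded_outputs P' + label_out a.
Proof.
elim=> {Psi P a P'} /=.
- move=> Psi M K N P _ wgP.
  by inversion_clear wgP as [| | ? ? ? _ outP | | | |]; rewrite outP.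
- move=> Psi M K pat k L _ wgP.
  by inversion_clear wgP as [| | | ? ? ? wgk | | |]; case: (wgk L) => _ ->.
- move=> Psi cs phi P a P' inP _ IH _ wgP.
  inversion_clear wgP as [| | | | ? wgcs | |].
  by case: (wgcs _ _ inP) => wgP outP; rewrite -IH // outP.
- move=> Psi P Q a P' _ IH wgPQ.
  by inversion_clear wgPQ as [| | | | | ? ? wgP _ |]; move: (IH wgP); lia.
- move=> Psi P Q a Q' _ IH wgPQ.
  by inversion_clear wgPQ as [| | | | | ? ? _ wgQ |]; move: (IH wgQ); lia.
- move=> Psi P a P' _ IH wgP.
  inversion_clear wgP as [| | | | | | ? ? outP].
  by rewrite -IH /= ?outP //; do 2?constructor.
- move=> Psi P Q M K N P' Q' _ IHP _ IHQ _ wgPQ.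
  inversion_clear wgPQ as [| | | | | ? ? wgP wgQ |].
  by move: (IHP wgP) (IHQ wgQ) => /=; lia.
- move=> Psi P Q M K N P' Q' _ IHP _ IHQ _ wgPQ.
  inversion_clear wgPQ as [| | | | | ? ? wgP wgQ |].
  by move: (IHP wgP) (IHQ wgQ) => /=; lia.
Qed.

Lemma tau_reach_well_guarded {P0 P} :
  tau_reach P0 P -> well_guarded P0 ->
  well_guarded P /\ unguarded_outputs P = unguarded_outputs P0.
Proof.
elim=> [//|{}P Q R _ IH stepQR] /IH [wgQ outQ].
split; first exact: trans_well_guarded stepQR wgQ.
by rewrite -outQ -[RHS]addn0 (trans_unguarded_outputs stepQR wgQ) addn0.
Qed.

Variable D : dcr T.

Lemma P_event_well_guarded e : well_guarded (P_event D e).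
Proof.
constructor=> //; constructor=> phi P /= [[_ <-] | //]; split=> //.
by constructor=> L; split=> //; do 2 constructor=> //; constructor.
Qed.

Lemma par_events_well_guarded (s : seq T) :
  well_guarded (par_list [seq P_event D e | e <- s]).
Proof.
by elim: s => [|e s IH] /=; constructor=> //; apply: P_event_well_guarded.
Qed.

Lemma unguarded_outputs_par_events (s : seq T) :
  unguarded_outputs (par_list [seq P_event D e | e <- s]) = 0.
Proof. by elim: s. Qed.

Lemma dcrpsi_well_guarded : well_guarded (dcrpsi D).
Proof.
constructor; last exact: par_events_well_guarded.
by constructor; constructor=> //; constructor.
Qed.

Lemma unguarded_outputs_dcrpsi : unguarded_outputs (dcrpsi D) = 1.
Proof. by rewrite /= unguarded_outputs_par_events. Qed.

End WellGuarded.

Theorem mainTheorem6 (T : finType) (D : dcr T) (P : proc T) :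
  dcr_wf D -> tau_reach (dcrpsi D) P -> unguarded_outputs P = 1.
Proof.
move=> _ reachP.
have [_ ->] := tau_reach_well_guarded reachP (dcrpsi_well_guarded D).
exact: unguarded_outputs_dcrpsi.
Qed.
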